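(* Let $n\ge 2$ be an integer, let $\gamma\ge 2n+2$ be an integer, and fix $\epsilon\in\left(\frac{1}{\gamma^2},\frac{1}{\gamma}\right)$. Set $\alpha_1=1$ and $\alpha_p=2^{\frac{p-1}{n}}$ for $2\le p\le n$, and $\widehat{\alpha}=\max_{1\le p\le n}\alpha_p$. For $p\in\{1,\dots,n\}$ and $q\in\{0,\dots,2n\}$ define $\psi^{p,q}:[0,1]\to\mathbb{R}$ by $\psi^{p,q}(x)=\alpha_p(x+q\epsilon)$, and $\Psi^q:[0,1]^n\to\mathbb{R}$ by $\Psi^q(x_1,\dots,x_n)=\sum_{p=1}^n\psi^{p,q}(x_p)$. For $k\in\mathbb{N}$ and $i\in\{0,\dots,\gamma^k\}$ put $\lambda^{p,q}_{k,i}=\psi^{p,q}\!\left(\frac{i}{\gamma^k}\right)$, put $\epsilon_k=\frac{\widehat{\alpha}}{\gamma^k}$, and let $A^q_{k,i}$ be the closed interval $\left[\frac{i}{\gamma^k}+q\epsilon,\ \frac{i}{\gamma^k}+\frac{\gamma^2-1}{\gamma^{k+2}}+q\epsilon\right]$. Then for every $p\in\{1,\dots,n\}$ and $q\in\{0,\dots,2n\}$ the following hold: (1) there is a constant $C>0$ independent of $k$ and $i$ such that for all $k\in\mathbb{N}$ and $0\le i\le \gamma^k-1$, $\lambda^{p,q}_{k,i}<\lambda^{p,q}_{k,i+1}\le\lambda^{p,q}_{k,i}+C\,2^{-k}$; (2) for all $k\in\mathbb{N}$, $i\in\{0,\dots,\gamma^k-1\}$ and $i'\in\{0,\dots,\gamma^{k+1}\}$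 such that the closed intervals $A^q_{k,i}$ and $A^q_{k+1,i'}$ do not intersect and $A^q_{k+1,i'}$ lies in the gap between $A^q_{k,i}$ and $A^q_{k,i+1}$, one has $\lambda^{p,q}_{k,i}\le\lambda^{p,q}_{k+1,i'}\le\lambda^{p,q}_{k,i}+\epsilon_k-\epsilon_{k+1}$; (3) for every $k\in\mathbb{N}$ and any two distinct tuples $(i_1,\dots,i_n)\ne(j_1,\dots,j_n)\in\{0,\dots,\gamma^k\}^n$, $$\Psi^q\!\left(\tfrac{i_1}{\gamma^k},\dots,\tfrac{i_n}{\gamma^k}\right)\ne\Psi^q\!\left(\tfrac{j_1}{\gamma^k},\dots,\tfrac{j_n}{\gamma^k}\right).$$
   Context: $\mathbb{N}$ denotes the positive integers. The ''gap between $A^q_{k,i}$ and $A^q_{k,i+1}$'' is the open interval between the right endpoint of $A^q_{k,i}$ and the left endpoint of $A^q_{k,i+1}$. *)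

From Stdlib Require Import Reals Lra Lia List.
Import ListNotations.
Open Scope R_scope.

Definition alpha (n p : nat) : R :=
  if Nat.eqb p 1 then 1 else Rpower 2 (INR (p - 1) / INR n).

Definition alpha_hat (n : nat) : R :=
  fold_right Rmax (alpha n 1) (map (alpha n) (seq 1 n)).

Definition psi (n : nat) (eps : R) (p q : nat) (x : R) : R :=
  alpha n p * (x + INR q * eps).

(* Psi^q(x_1,...,x_n) = sum_{p=1}^n psi^{p,q}(x_p); tuples are nat -> R,
   only the entries 1..n matter *)
Definition Psi (n : nat) (eps : R) (q : nat) (x : nat -> R) : R :=
  fold_right Rplus 0 (map (fun p => psi n eps p q (x p)) (seq 1 n)).

Definition lambda (n g : nat) (eps : R) (p q k i : nat) : R :=
  psi n eps p q (INR i / INR g ^ k).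

Definition eps_k (n g k : nat) : R := alpha_hat n / INR g ^ k.

Definition A_left (g : nat) (eps : R) (q k i : nat) : R :=
  INR i / INR g ^ k + INR q * eps.
Definition A_right (g : nat) (eps : R) (q k i : nat) : R :=
  INR i / INR g ^ k + (INR g ^ 2 - 1) / INR g ^ (k + 2) + INR q * eps.

Definition A (g : nat) (eps : R) (q k i : nat) : R -> Prop :=
  fun x => A_left g eps q k i <= x <= A_right g eps q k i.

(* Parts (1) and (2) only use that each psi^{p,q} is increasing and affine with
   slope alpha_p <= alpha_hat: consecutive points of the grid of mesh gamma^-k are
   1/gamma^k apart, and an interval A_{k+1,i'} in the gap after A_{k,i} has index
   i' = i gamma + j with j < gamma.  Part (3) is the Q-linear independence of
   1, t, ..., t^(n-1) for t = 2^(1/n), since alpha_p = t^(p-1): the polynomial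
   X^n - 2 is irreducible over Q by Eisenstein's criterion at 2, so no nonzero
   rational polynomial of degree < n vanishes at t.  Differences of grid points
   are rational, hence Psi^q separates them. *)

From Stdlib Require Import Reals Lra Lia List.
From mathcomp Require all_boot all_order all_algebra Rstruct.
Open Scope R_scope.

Lemma fold_right_Rmax_ge (l : list R) (d x : R) : In x l -> x <= fold_right Rmax d l.
Proof.
  induction l as [|a l IH]; simpl; intros Hx; [contradiction|].
  destruct Hx as [<-|Hx].
  - apply Rmax_l.
  - eapply Rle_trans; [apply IH, Hx | apply Rmax_r].
Qed.

Lemma alpha_pos (n p : nat) : 0 < alpha n p.
Proof. unfold alpha; destruct (Nat.eqb p 1); [lra | apply exp_pos]. Qed.

Lemma alpha_le_hat (n p : nat) : (1 <= p <= n)%nat -> alpha n p <= alpha_hat n.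
Proof.
  intros Hp; apply fold_right_Rmax_ge, in_map, in_seq; lia.
Qed.

Definition nth_root2 (n : nat) : R := Rpower 2 (/ INR n).

Lemma nth_root2_pos (n : nat) : 0 < nth_root2 n.
Proof. apply exp_pos. Qed.

Lemma nth_root2_pow (n : nat) : (0 < n)%nat -> nth_root2 n ^ n = 2.
Proof.
  intros Hn; unfold nth_root2.
  rewrite <- Rpower_pow, Rpower_mult, Rinv_l by (apply exp_pos || (apply not_0_INR; lia)).
  apply Rpower_1; lra.
Qed.

Lemma alpha_nth_root2 (n p : nat) : alpha n p = nth_root2 n ^ (p - 1).
Proof.
  unfold alpha; destruct (Nat.eqb_spec p 1) as [->|_]; [reflexivity|].
  rewrite <- Rpower_pow by apply nth_root2_pos.
  unfold nth_root2; rewrite Rpower_mult; f_equal; unfold Rdiv; ring.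
Qed.

Definition grid_point (g k i : nat) : R := INR i / INR g ^ k.

Lemma grid_point_refine g k i : (0 < g)%nat ->
  grid_point g (k + 1) (i * g) = grid_point g k i.
Proof.
  intros Hg; assert (0 < INR g) by (apply lt_0_INR; lia).
  assert (0 < INR g ^ k) by (apply pow_lt; lra).
  unfold grid_point; rewrite mult_INR, pow_add; field; lra.
Qed.

Lemma grid_point_lt g k i j : (0 < g)%nat ->
  grid_point g k i < grid_point g k j -> (i < j)%nat.
Proof.
  intros Hg Hij; apply INR_lt, (Rmult_lt_reg_r (/ INR g ^ k)); [|exact Hij].
  apply Rinv_0_lt_compat, pow_lt, lt_0_INR; lia.
Qed.

Lemma lambda_add n g eps p q k i j :
  lambda n g eps p q k (i + j) = lambda n g eps p q k i + alpha n p * INR j / INR g ^ k.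
Proof. unfold lambda, psi; rewrite plus_INR; unfold Rdiv; ring. Qed.

Lemma lambda_refine n g eps p q k i : (0 < g)%nat ->
  lambda n g eps p q (k + 1) (i * g) = lambda n g eps p q k i.
Proof. intros Hg; unfold lambda; fold (grid_point g (k + 1) (i * g)); now rewrite grid_point_refine. Qed.

Lemma eps_k_sub_succ n g k : (0 < g)%nat ->
  eps_k n g k - eps_k n g (k + 1) = alpha_hat n * INR (g - 1) / INR g ^ (k + 1).
Proof.
  intros Hg; assert (0 < INR g) by (apply lt_0_INR; lia).
  assert (0 < INR g ^ k) by (apply pow_lt; lra).
  unfold eps_k; rewrite minus_INR, pow_add by lia; simpl INR; field; lra.
Qed.

Lemma lambda_step_bounds n g eps p q k i : (2 <= g)%nat ->
  lambda n g eps p q k i < lambda n g eps p q k (i + 1) /\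
  lambda n g eps p q k (i + 1) <= lambda n g eps p q k i + alpha n p * / 2 ^ k.
Proof.
  intros Hg; rewrite lambda_add; simpl INR; rewrite Rmult_1_r.
  assert (H2 : 2 <= INR g) by (apply (le_INR 2); lia).
  assert (0 < 2 ^ k) by (apply pow_lt; lra).
  assert (2 ^ k <= INR g ^ k) by (apply pow_incr; lra).
  pose proof (alpha_pos n p).
  split.
  - assert (0 < alpha n p / INR g ^ k) by (apply Rdiv_lt_0_compat; lra); lra.
  - apply Rplus_le_compat_l, Rmult_le_compat_l; [lra|].
    apply Rinv_le_contravar; lra.
Qed.

Lemma lambda_child_bounds n g eps p q k i j :
  (1 <= p <= n)%nat -> (j < g)%nat ->
  lambda n g eps p q k i <= lambda n g eps p q (k + 1) (i * g + j) /\
  lambda n g eps p q (k + 1) (i * g + j) <=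
    lambda n g eps p q k i + eps_k n g k - eps_k n g (k + 1).
Proof.
  intros Hp Hj.
  rewrite lambda_add, lambda_refine by lia.
  pose proof (eps_k_sub_succ n g k ltac:(lia)).
  assert (0 < INR g ^ (k + 1)) by (apply pow_lt, lt_0_INR; lia).
  assert (0 <= INR j <= INR (g - 1)) by (split; [apply pos_INR | apply le_INR; lia]).
  pose proof (alpha_pos n p); pose proof (alpha_le_hat n p Hp).
  assert (0 < / INR g ^ (k + 1)) by (apply Rinv_0_lt_compat; lra).
  assert (0 <= alpha n p * INR j <= alpha_hat n * INR (g - 1)) by (split; [|apply Rmult_le_compat]; nra).
  unfold Rdiv in *; split; nra.
Qed.

(* The hypothesis can in fact never
   hold: A_{k+1,i'} has length (g^2-1)/g^(k+3), longer than the gap 1/g^(k+2). *)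
Lemma gap_index_bounds g eps q k i i' : (0 < g)%nat ->
  (forall x, A g eps q (k + 1) i' x -> A_right g eps q k i < x < A_left g eps q k (i + 1)) ->
  (i * g < i' < (i + 1) * g)%nat.
Proof.
  intros Hg Hgap.
  assert (1 <= INR g) by (apply (le_INR 1); lia).
  assert (Hlen : forall k', 0 <= (INR g ^ 2 - 1) / INR g ^ k').
  { intros k'; apply Rle_mult_inv_pos; [nra | apply pow_lt; lra]. }
  destruct (Hgap (A_left g eps q (k + 1) i')) as [Hlo Hhi].
  { unfold A, A_left, A_right; specialize (Hlen (k + 1 + 2)%nat); lra. }
  unfold A_left, A_right in Hlo, Hhi; specialize (Hlen (k + 2)%nat).
  split; apply (grid_point_lt g (k + 1) _ _ Hg); rewrite grid_point_refine by exact Hg;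
    unfold grid_point; lra.
Qed.

(* MathComp is imported only inside this module, so that its notations do not
   reach the statement of [lemma3p2]. *)
Module PowerBasis.
Import all_boot all_order all_algebra Rstruct.
Import GRing.Theory Num.Theory.
Local Open Scope ring_scope.

Lemma irreducible_Xn_sub2 (n : nat) : (0 < n)%N -> irreducible_poly ('X^n - 2%:P : {poly rat}).
Proof.
move=> n_gt0.
have -> : 'X^n - 2%:P = map_poly (intr : int -> rat) ('X^n - 2%:P : {poly int}).
  by rewrite rmorphB /= map_polyXn map_polyC.
apply/irreducible_rat_int/(eisenstein_crit (p := 2)) => //.
- by rewrite size_XnsubC //; case: (n) n_gt0.
- by rewrite (eqP (monicXnsubC _ n_gt0)).
- by rewrite coefB coefXn coefC /= eq_sym (gtn_eqF n_gt0).
- move=> i; rewrite size_XnsubC // => /= lt_i_n.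
  by rewrite coefB coefXn coefC (ltn_eqF lt_i_n); case: (i == 0)%N.
Qed.

Lemma irreducible_root_size_leq (F : numFieldType) (Q P : {poly rat}) (x : F) :
  irreducible_poly Q -> root (map_poly ratr Q) x -> P != 0 ->
  root (map_poly ratr P) x -> (size Q <= size P)%N.
Proof.
move=> Q_irr rootQ P_neq0 rootP; apply: contraLR rootP; rewrite -ltnNge => ltPQ.
apply: (coprimep_root _ rootQ); rewrite coprimep_map irreducible_poly_coprime //.
by apply: contraTN ltPQ => /(dvdp_leq P_neq0); rewrite leqNgt.
Qed.

Lemma nth_root2_powers_free (F : numFieldType) (n : nat) (t : F) (c : nat -> rat) :
  t ^+ n = 2 -> \sum_(i < n) ratr (c i) * t ^+ i = 0 -> forall i, (i < n)%N -> c i = 0.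
Proof.
move=> tn sum_eq0 i lt_i_n.
have n_gt0 : (0 < n)%N by apply: leq_ltn_trans lt_i_n.
pose P : {poly rat} := \poly_(j < n) c j.
have -> : c i = P`_i by rewrite coef_poly lt_i_n.
suff -> : P = 0 by rewrite coef0.
apply/eqP; apply: contraT => P_neq0.
have := @irreducible_root_size_leq F _ P t (irreducible_Xn_sub2 _ n_gt0).
rewrite rmorphB /= map_polyXn map_polyC /= ratr_nat size_XnsubC // ltnNge size_poly //.
move=> /(_ _ P_neq0); apply; first by rewrite /root !hornerE tn subrr.
have -> : map_poly ratr P = \poly_(j < n) ratr (c j) :> {poly F}.
  apply/polyP => j; rewrite coef_map !coef_poly; by case: (j < n)%N; rewrite ?raddf0.
by rewrite /root horner_poly sum_eq0.
Qed.

Lemma fold_right_Rplus_seq (f : nat -> R) (m n : nat) :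
  fold_right Rplus 0%R (List.map f (List.seq m n)) = \sum_(i < n) f (m + i)%N.
Proof.
elim: n m => [|n IHn] m /=; first by rewrite big_ord0.
by rewrite big_ord_recl IHn addn0 RplusE; congr (_ + _); apply: eq_bigr => i _; rewrite addSnnS.
Qed.

Lemma Psi_eq_rat_diff (n : nat) (eps : R) (q : nat) (x y : nat -> R) (d : nat -> rat) :
  (forall p, x p - y p = ratr (d p)) ->
  Psi n eps q x = Psi n eps q y -> forall p, (0 < p <= n)%N -> x p = y p.
Proof.
move=> xy_rat Psi_xy p /andP[p_gt0 p_le_n]; apply/eqP; rewrite -subr_eq0 xy_rat.
have Psi_sub : Psi n eps q x - Psi n eps q y =
    \sum_(i < n) ratr (d i.+1) * nth_root2 n ^+ i.
  rewrite /Psi !fold_right_Rplus_seq -sumrB; apply: eq_bigr => i _.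
  rewrite /psi alpha_nth_root2 RpowE !RmultE !RplusE add1n /= Nat.sub_0_r -xy_rat.
  by rewrite [RHS]mulrC -mulrBr opprD addrACA subrr addr0.
have root2_n : nth_root2 n ^+ n = 2.
  by rewrite -RpowE nth_root2_pow ?IZRposE ?INRE //; apply/ltP; apply: leq_trans p_le_n.
have := @nth_root2_powers_free _ n _ (fun i => d i.+1) root2_n.
rewrite -Psi_sub Psi_xy subrr => /(_ erefl p.-1).
by rewrite prednK // => -> //; rewrite rmorph0.
Qed.

Lemma Psi_grid_point_inj (n g : nat) (eps : R) (q k : nat) (ii jj : nat -> nat) :
  (0 < g)%coq_nat ->
  Psi n eps q (fun r => grid_point g k (ii r)) = Psi n eps q (fun r => grid_point g k (jj r)) ->
  forall p, (1 <= p /\ p <= n)%coq_nat -> ii p = jj p.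
Proof.
move=> /ltP g_gt0 Psi_eq p [/leP p_gt0 /leP p_le_n].
have G_neq0 : (g%:R ^+ k : R) != 0 by rewrite expf_neq0 // pnatr_eq0 -lt0n.
have grid_E i : grid_point g k i = i%:R / g%:R ^+ k by rewrite /grid_point RdivE INRE RpowE INRE.
pose d r : rat := ((ii r)%:R - (jj r)%:R) / g%:R ^+ k.
have grid_sub r : grid_point g k (ii r) - grid_point g k (jj r) = ratr (d r).
  by rewrite !grid_E fmorph_div rmorphB rmorphXn /= !ratr_nat -mulrBl.
have := Psi_eq_rat_diff _ _ _ _ _ _ grid_sub Psi_eq p.
rewrite !grid_E p_le_n p_gt0 => /(_ isT) /(mulIf (invr_neq0 G_neq0)).
by move=> /eqP; rewrite eqr_nat => /eqP.
Qed.
End PowerBasis.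

Theorem lemma3p2 (n g : nat) (eps : R)
  (Hn : (2 <= n)%nat) (Hg : (2 * n + 2 <= g)%nat)
  (Heps1 : 1 / INR g ^ 2 < eps) (Heps2 : eps < 1 / INR g) :
  forall p q : nat, (1 <= p <= n)%nat -> (q <= 2 * n)%nat ->
  (* (1) *)
  (exists C : R, 0 < C /\
     forall k i : nat, (1 <= k)%nat -> (i <= g ^ k - 1)%nat ->
       lambda n g eps p q k i < lambda n g eps p q k (i + 1) /\
       lambda n g eps p q k (i + 1) <= lambda n g eps p q k i + C * / 2 ^ k)
  /\
  (* (2) *)
  (forall k i i' : nat, (1 <= k)%nat -> (i <= g ^ k - 1)%nat ->
     (i' <= g ^ (k + 1))%nat ->
     ~ (exists x, A g eps q k i x /\ A g eps q (k + 1) i' x) ->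
     (forall x, A g eps q (k + 1) i' x ->
        A_right g eps q k i < x < A_left g eps q k (i + 1)) ->
     lambda n g eps p q k i <= lambda n g eps p q (k + 1) i' /\
     lambda n g eps p q (k + 1) i' <=
       lambda n g eps p q k i + eps_k n g k - eps_k n g (k + 1))
  /\
  (* (3) *)
  (forall (k : nat) (ii jj : nat -> nat), (1 <= k)%nat ->
     (forall r, (1 <= r <= n)%nat -> (ii r <= g ^ k)%nat /\ (jj r <= g ^ k)%nat) ->
     (exists r, (1 <= r <= n)%nat /\ ii r <> jj r) ->
     Psi n eps q (fun r => INR (ii r) / INR g ^ k) <>
     Psi n eps q (fun r => INR (jj r) / INR g ^ k)).
Proof.
  (* Of the hypotheses on [n], [g], [eps] and the index ranges only [2 <= g] is needed. *)
  intros p q Hp _.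
  split; [|split].
  - exists (alpha n p); split; [apply alpha_pos|].
    intros k i _ _; apply lambda_step_bounds; lia.
  - intros k i i' _ _ _ _ Hgap.
    destruct (gap_index_bounds g eps q k i i' ltac:(lia) Hgap) as [Hlo Hhi].
    replace i' with (i * g + (i' - i * g))%nat by lia.
    apply lambda_child_bounds; lia.
  - intros k ii jj _ _ [r [Hr Hne]] HPsi.
    apply Hne, (PowerBasis.Psi_grid_point_inj n g eps q k ii jj); [lia | exact HPsi | exact Hr].
Qed.
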